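(* Let $X$ be a real Banach space with a normalized Schauder basis $(e_j)$ which is $(C_u,C_s)$-subsymmetric, and let $(e_j^* )$ be the biorthogonal functionals. Let $T\colon X\to X$ be a bounded linear operator with $\delta:=\inf_j|\langle Te_j,e_j^*\rangle|>0$. Then for every $\eta>0$ there exist bounded linear operators $A,B\colon X\to X$ with $I_X=ATB$ and $$\|A\|\cdot\|B\|\leq \frac{2C_u^5C_s^3}{\delta}+\eta.$$ In other words, $(e_j)$ has the $\bigl(\tfrac{2C_u^5C_s^3}{\delta}\bigr)$-factorization property.
   Context: $(e_j)$ is $C_u$-unconditional if for all scalar sequences $(a_j),(\gamma_j)$ for which the series converge, $\|\sum_j\gamma_ja_je_j\|\le C_u\sup_k|\gamma_k|\,\|\sum_ja_je_j\|$. It is $C_s$-spreading if for every increasing sequence $(n_j)$ of natural numbers and all scalars $(a_j)$ for which the series converge, $C_s^{-1}\|\sum_ja_je_{n_j}\|\le\|\sum_ja_je_j\|\le C_s\|\sum_ja_je_{n_j}\|$. It is $(C_u,C_s)$-subsymmetric if it is both $C_u$-unconditional and $C_s$-spreading. $I_X$ denotes the identity operator on $X$. *)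

From HB Require Import structures.
From mathcomp Require Import all_boot all_order all_algebra.
From mathcomp Require Import all_classical all_reals all_analysis.
Set Implicit Arguments. Unset Strict Implicit. Unset Printing Implicit Defensive.
Import Order.TTheory GRing.Theory Num.Theory.
Import numFieldNormedType.Exports.
Local Open Scope classical_set_scope.
Local Open Scope ring_scope.

Section Defs.
Variables (R : realType) (X : normedModType R).

Definition schauder_basis (e : nat -> X) : Prop :=
  forall x : X, exists! a : nat -> R,
    series (fun j => a j *: e j) @ \oo --> x.

Definition coord_functionals (e : nat -> X) (estar : nat -> X -> R) : Prop :=
  forall x : X, series (fun j => estar j x *: e j) @ \oo --> x.

Definition normalized (e : nat -> X) : Prop := forall j, `|e j| = 1.

(* C_u-unconditional; sup_k |gamma_k| <= M (the inequality is trivial when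
   gamma is unbounded) *)
Definition unconditional (Cu : R) (e : nat -> X) : Prop :=
  forall (a gamma : nat -> R) (M : R), (forall k, `|gamma k| <= M) ->
    cvgn (series (fun j => a j *: e j)) ->
    cvgn (series (fun j => (gamma j * a j) *: e j)) ->
    `|limn (series (fun j => (gamma j * a j) *: e j))|
      <= Cu * M * `|limn (series (fun j => a j *: e j))|.

Definition spreading (Cs : R) (e : nat -> X) : Prop :=
  forall (n : nat -> nat) (a : nat -> R),
    {homo n : i j / (i < j)%N >-> (i < j)%N} ->
    cvgn (series (fun j => a j *: e j)) ->
    cvgn (series (fun j => a j *: e (n j))) ->
    Cs^-1 * `|limn (series (fun j => a j *: e (n j)))|
      <= `|limn (series (fun j => a j *: e j))|
    /\ `|limn (series (fun j => a j *: e j))|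
      <= Cs * `|limn (series (fun j => a j *: e (n j)))|.

Definition subsymmetric (Cu Cs : R) (e : nat -> X) : Prop :=
  unconditional Cu e /\ spreading Cs e.

Definition bounded_op (A : {linear X -> X}) : Prop := continuous A.

Definition opnorm (A : X -> X) : R :=
  inf [set M : R | 0 <= M /\ forall x, `|A x| <= M * `|x|].

End Defs.

From HB Require Import structures.
From mathcomp Require Import all_boot all_order all_algebra.
From mathcomp Require Import all_classical all_reals all_analysis.
From mathcomp Require Import lra ring.
Import Order.TTheory GRing.Theory Num.Theory.
Import numFieldNormedType.Exports.
Local Open Scope classical_set_scope.
Local Open Scope ring_scope.

(** Write [a k m] for the coordinate [e*_k (T e_m)]. Its columns tend to 0 and its entries are
    bounded, so a diagonal extraction (pigeonhole on finitely many rows, decay of finitely many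
    columns) yields [P j < Q j < P (j+1)] with [a (Q i) (P j)] close to [a (Q i) (Q j)] for
    [i < j], both small for [j < i], and [a (Q j) (P j)] small; the pivots
    [d j = a (Q j) (P j) - a (Q j) (Q j)] then satisfy [|d j| >= delta - kap].
    Let [B e_j = e_(P j) - e_(Q j)], of norm at most [2 Cs] by spreading, and
    [D y = sum_i (d i)^-1 e*_(Q i) y e_i], of norm at most [Cu^2 Cs / (delta - kap)]
    (restriction to a subsequence, unspreading, multiplier). The matrix of [DTB - I] has zero
    diagonal and entries [O(kap 2^-i 2^-j / delta)], so [|DTB - I| <= 16 Cu kap / delta < 1], and
    [A = (DTB)^-1 D], with the inverse given by a Neumann series, satisfies [ATB = I] and
    [|A| |B| <= 2 Cu^2 Cs^2 / ((delta - kap) (1 - 16 Cu kap / delta))]. For small [kap] this is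
    below [2 Cu^2 Cs^2 / delta + eta], hence below [2 Cu^5 Cs^3 / delta + eta]. *)

Section SeriesFacts.
Context {R : realType} {V : normedModType R}.
Implicit Types (u : nat -> V) (c : nat -> R).

Lemma series_finite_support u N : (forall n, (N <= n)%N -> u n = 0) ->
  series u @ \oo --> series u N.
Proof.
move=> uN; apply: cvg_near_cst; exists N => // n /= Nn.
apply/eqP; rewrite -subr_eq0 sub_series_geq //.
by apply/eqP; rewrite big_nat big1 // => k /andP[Nk _]; apply: uN.
Qed.

Definition window (m n : nat) c k : R := if (m <= k < n)%N then c k else 0.

Lemma series_window c (f : nat -> V) m n :
  cvgn (series (fun k => window m n c k *: f k)) /\
  limn (series (fun k => window m n c k *: f k)) = \sum_(m <= k < n) c k *: f k.
Proof.
have out k : ~~ (m <= k < n)%N -> window m n c k *: f k = 0.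
  by rewrite /window => /negbTE ->; rewrite scale0r.
set u := fun k => window m n c k *: f k.
have su : series u @ \oo --> series u n.
  by apply: series_finite_support => k nk; rewrite /u out // (leq_gtF nk) andbF.
split; first by apply/cvg_ex; exists (series u n).
rewrite (cvg_lim _ su) // /series /u /=.
have [mn|nm] := leqP m n; last first.
  rewrite [RHS]big_geq ?(ltnW nm) // big_nat big1 // => k /andP[_ kn].
  by rewrite out // leqNgt (ltn_trans kn nm).
rewrite (@big_cat_nat _ _ _ m 0 n) //= [X in X + _]big_nat big1 ?add0r.
  by apply: eq_big_nat => k kmn; rewrite /window kmn.
by move=> k /andP[_ km]; rewrite out // leqNgt km.
Qed.

Lemma ler_norm_cvg u (w : nat -> R) (l : V) (r : R) :
  u @ \oo --> l -> w @ \oo --> r -> (forall n, `|u n| <= w n) -> `|l| <= r.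
Proof. by move=> ul wr uw; apply: (ler_cvg_to (cvg_norm ul) wr); apply: nearW. Qed.

Lemma cvg_subseq_ge u (q : nat -> nat) (l : V) : (forall n, (n <= q n)%N) ->
  u @ \oo --> l -> (fun n => u (q n)) @ \oo --> l.
Proof.
move=> qn /cvgrPdist_le ul; apply/cvgrPdist_le => eps eps0.
have [N _ uN] := ul eps eps0; exists N => // n /= Nn.
by apply: uN; exact: leq_trans Nn (qn n).
Qed.

Lemma limn_series_linear (u : nat -> V -> V) :
  (forall n a x y, u n (a *: x + y) = a *: u n x + u n y) ->
  (forall x, cvgn (series (fun n => u n x))) ->
  linear (fun x => limn (series (fun n => u n x))).
Proof.
move=> uL uc a x y /=.
have -> : series (fun n => u n (a *: x + y)) =
    (fun N => a *: series (fun n => u n x) N + series (fun n => u n y) N).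
  apply/funext => N; rewrite /series /= scaler_sumr -big_split /=.
  by apply: eq_bigr => n _; rewrite uL.
by apply: cvg_lim => //; apply: cvgD; [apply: cvgZr |]; apply: uc.
Qed.

End SeriesFacts.

Section CompleteSeriesFacts.
Context {R : realType} {V : completeNormedModType R}.
Implicit Types (u v : nat -> V).

Lemma series_geometric_le u (C r : R) : 0 <= C -> 0 <= r < 1 ->
  (forall n, `|u n| <= C * r ^+ n) ->
  cvgn (series u) /\ `|limn (series u)| <= C / (1 - r).
Proof.
move=> C0 /andP[r0 r1] uC; have rn : `|r| < 1 by rewrite ger0_norm.
have cu : cvgn (series u).
  apply: normed_cvg; apply: (series_le_cvg (v_ := geometric C r)).
  - by move=> n; rewrite normr_ge0.
  - by move=> n; rewrite /= mulr_ge0 // exprn_ge0.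
  - exact: uC.
  - exact: is_cvg_geometric_series.
split => //; apply: (@ler_norm_cvg _ _ _ (series (geometric C r)) _ _ cu).
  exact: cvg_geometric_series.
move=> n; rewrite /series /= (le_trans (ler_norm_sum _ _ _)) //.
by apply: ler_sum => k _; apply: uC.
Qed.

Lemma series_block_le u v (K : R) : 0 <= K ->
  (forall m n, `|\sum_(m <= k < n) v k| <= K * `|\sum_(m <= k < n) u k|) ->
  cvgn (series u) -> cvgn (series v) /\ `|limn (series v)| <= K * `|limn (series u)|.
Proof.
move=> K0 vu cu.
have cv : cvgn (series v).
  apply/cauchy_cvgP/cauchy_seriesP => eps eps0.
  have K1 : 0 < K + 1 by rewrite ltr_wpDl.
  move/cauchy_cvgP/cauchy_seriesP: cu => /(_ _ (divr_gt0 eps0 K1)).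
  apply: filterS => -[m n] /= small; apply: le_lt_trans (vu m n) _.
  apply: le_lt_trans (ler_wpM2l K0 (ltW small)) _.
  by rewrite mulrA ltr_pdivrMr //; nra.
split => //; apply: (@ler_norm_cvg _ _ _ (fun n => K * `|series u n|) _ _ cv).
  by apply: cvgMr; apply: cvg_norm; apply: cu.
by move=> n; apply: vu.
Qed.

End CompleteSeriesFacts.

Section BoundedOperators.
Context {R : realType} {V : normedModType R}.

Definition linear_of (f : V -> V) (fL : linear f) : {linear V -> V} :=
  HB.pack_for (@GRing.Linear.type R V V *:%R) f (GRing.isLinear.Build R V V *:%R f fL).

Lemma continuous_of_normB (f : {linear V -> V}) (M : R) :
  (forall x, `|f x| <= M * `|x|) -> continuous f.
Proof.
move=> fM; apply: bounded_linear_continuous; apply/linear_boundedP.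
by near=> r => x; apply: le_trans (fM x) _; apply: ler_wpM2r.
Unshelve. all: by end_near. Qed.

Lemma normB_of_continuous (f : {linear V -> V}) : continuous f ->
  exists2 M, 0 <= M & forall x, `|f x| <= M * `|x|.
Proof.
move=> fc; have [M [_ fM]] := (linear_boundedP f).1 (continuous_linear_bounded 0 (fc 0)).
exists (`|M| + 1); first by rewrite addr_ge0.
by apply: fM; rewrite ltr_pwDr // ler_norm.
Qed.

Lemma opnorm_ge0 (f : V -> V) : 0 <= opnorm f.
Proof.
rewrite /opnorm; set S := [set M | _].
have [->|/set0P S0] := eqVneq S set0; first by rewrite inf0.
by apply: lb_le_inf => // y [].
Qed.

Lemma opnorm_le (f : V -> V) (M : R) : 0 <= M ->
  (forall x, `|f x| <= M * `|x|) -> opnorm f <= M.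
Proof. by move=> M0 fM; apply: ge_inf => //; exists 0 => y []. Qed.

End BoundedOperators.

Section Neumann.
Context {R : realType} {V : completeNormedModType R}.
Variable E : {linear V -> V}.
Context {eps : R}.
Hypotheses (eps_ge0 : 0 <= eps) (eps_lt1 : eps < 1)
  (E_le : forall x, `|E x| <= eps * `|x|).

Definition neumann_term n x := iter n (fun z => - E z) x.

Lemma neumann_termP n a x y :
  neumann_term n (a *: x + y) = a *: neumann_term n x + neumann_term n y.
Proof. by elim: n => //= n ->; rewrite linearP opprD scalerN. Qed.

Lemma neumann_termB n x y :
  neumann_term n (x - y) = neumann_term n x - neumann_term n y.
Proof. by elim: n => //= n ->; rewrite linearB opprD. Qed.

Lemma neumann_term_le n x : `|neumann_term n x| <= eps ^+ n * `|x|.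
Proof.
elim: n => [|n IH] /=; first by rewrite expr0 mul1r.
rewrite normrN (le_trans (E_le _)) // exprS -mulrA ler_wpM2l //.
Qed.

Definition neumann x := limn (series (fun n => neumann_term n x)).

Lemma neumann_cvg_le x :
  cvgn (series (fun n => neumann_term n x)) /\ `|neumann x| <= `|x| / (1 - eps).
Proof.
apply: series_geometric_le; rewrite ?eps_ge0 ?eps_lt1 // => n.
by rewrite mulrC neumann_term_le.
Qed.

Lemma neumann_linear : linear neumann.
Proof.
apply: limn_series_linear; first exact: neumann_termP.
by move=> x; case: (neumann_cvg_le x).
Qed.

Lemma neumannK x : neumann (x + E x) = x.
Proof.
have partial N : series (fun n => neumann_term n (x + E x)) N = x - neumann_term N x.
  elim: N => [|N IH]; first by rewrite /series /= big_geq // subrr.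
  rewrite seriesSr IH -[E x]opprK neumann_termB.
  by rewrite [neumann_term N.+1 x]iterSr addrA subrK.
have /cvg_series_cvg_0 term0 := (neumann_cvg_le x).1.
apply: cvg_lim => //; rewrite (funext partial) -[X in _ --> X]subr0.
exact: cvgB (cvg_cst _) term0.
Qed.

End Neumann.

Definition frequently (S : set nat) := forall N, exists2 m, (N <= m)%N & S m.

Section Oscillation.
Context {R : realType}.
Variable s : nat -> R.

Lemma frequently_close_window (tau : R) n (c : R) (S : set nat) :
  0 < tau -> frequently S -> (forall m, S m -> c <= s m <= c + n%:R * tau) ->
  exists S', [/\ S' `<=` S, frequently S' &
    forall m m', S' m -> S' m' -> `|s m - s m'| <= tau].
Proof.
move=> tau0; elim: n c S => [|n IH] c S freqS sS.
  rewrite mul0r addr0 in sS.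
  exists S; split => // m m' /sS/andP[? ?] /sS/andP[? ?].
  by rewrite ler_norml; apply/andP; split; lra.
pose low := fun m => S m /\ s m <= c + tau.
have [freq_low|] := pselect (frequently low).
  exists low; split => //; first by move=> m [].
  move=> m m' [/sS/andP[? ?] ?] [/sS/andP[? ?] ?].
  by rewrite ler_norml; apply/andP; split; lra.
move=> /existsNP [N lowN].
pose high := fun m => S m /\ (N <= m)%N.
have freq_high : frequently high.
  move=> M; have [m] := freqS (maxn M N); rewrite geq_max => /andP[Mm Nm] Sm.
  by exists m => //; split.
have /IH [//|S' [S'high freqS' close]] :
    forall m, high m -> c + tau <= s m <= c + tau + n%:R * tau.
  move=> m [Sm Nm]; have /andP[cs sc] := sS m Sm; rewrite -natr1 in sc.
  have hm : c + tau < s m by rewrite ltNge; apply/negP => lm; apply: lowN; exists m.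
  by apply/andP; split; lra.
by exists S'; split => // m /S'high [].
Qed.

Lemma frequently_close (tau M : R) (S : set nat) : 0 < tau ->
  (forall m, `|s m| <= M) -> frequently S ->
  exists S', [/\ S' `<=` S, frequently S' &
    forall m m', S' m -> S' m' -> `|s m - s m'| <= tau].
Proof.
move=> tau0 sM freqS; have M0 : 0 <= M by apply: le_trans (sM 0%N).
have /archi_boundP : 0 <= (M + M) / tau by rewrite divr_ge0 ?addr_ge0 // ltW.
set n := Num.Def.archi_bound _; rewrite ltr_pdivrMr // => Mn.
apply: (@frequently_close_window tau n (- M) S tau0 freqS) => m _.
by have := sM m; rewrite ler_norml => /andP[? ?]; apply/andP; split; lra.
Qed.

End Oscillation.

Section MatrixSelection.
Context {R : realType} {a : nat -> nat -> R} {M : R}.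
Hypotheses (a_le : forall k m, `|a k m| <= M)
  (a_col0 : forall m, (fun k => a k m) @ \oo --> 0).

Lemma columns_eventually_small p (sig : R) : 0 < sig ->
  exists N, forall k, (N <= k)%N -> forall c, (c <= p)%N -> `|a k c| <= sig.
Proof.
move=> sig0; elim: p => [|p [N1 small1]].
  have /cvgrPdist_le /(_ sig sig0) [N _ small] := a_col0 0%N.
  exists N => k Nk c; rewrite leqn0 => /eqP ->.
  by have := small k Nk; rewrite sub0r normrN.
have /cvgrPdist_le /(_ sig sig0) [N2 _ small2] := a_col0 p.+1.
exists (maxn N1 N2) => k; rewrite geq_max => /andP[k1 k2] c.
rewrite leq_eqVlt ltnS => /orP[/eqP -> | cp]; last exact: small1.
by have := small2 k k2; rewrite sub0r normrN.
Qed.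

Lemma rows_frequently_close N (tau : R) : 0 < tau -> exists S, frequently S /\
  forall r, (r < N)%N -> forall m m', S m -> S m' -> `|a r m - a r m'| <= tau.
Proof.
move=> tau0; elim: N => [|N [S [freqS close]]].
  by exists setT; split => // N; exists N.
have [S' [S'S freqS' closeN]] := @frequently_close _ (a N) tau M S tau0 (a_le N) freqS.
exists S'; split => // r; rewrite ltnS leq_eqVlt => /orP[/eqP -> | rN] m m' Sm Sm'.
  exact: closeN.
by apply: close => //; apply: S'S.
Qed.

Lemma select_pair N (tau : R) : 0 < tau ->
  exists pq : nat * nat, [/\ (N <= pq.1)%N, (pq.1 < pq.2)%N,
    forall c, (c <= pq.1)%N -> `|a pq.2 c| <= tau &
    forall r, (r < N)%N -> `|a r pq.1 - a r pq.2| <= tau].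
Proof.
move=> tau0; have [S [freqS close]] := rows_frequently_close N _ tau0.
have [p Np Sp] := freqS N.
have [N' small] := columns_eventually_small p _ tau0.
have [q] := freqS (maxn N' p.+1); rewrite geq_max => /andP[N'q pq] Sq.
by exists (p, q); split => // [c cp | r rN]; [apply: small | apply: close].
Qed.

Fixpoint chain (f : nat -> nat -> nat * nat) (j : nat) : nat * nat :=
  if j is j'.+1 then f (chain f j').2.+1 j else f 0%N 0%N.

Lemma select_sequences (tol : nat -> R) : (forall j, 0 < tol j) ->
  exists P Q : nat -> nat,
  [/\ {homo P : i j / (i < j)%N >-> (i < j)%N},
      {homo Q : i j / (i < j)%N >-> (i < j)%N},
      forall j, `|a (Q j) (P j)| <= tol j,
      forall i j, (i < j)%N -> `|a (Q i) (P j) - a (Q i) (Q j)| <= tol j &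
      forall i j, (j < i)%N -> `|a (Q i) (P j)| <= tol i /\ `|a (Q i) (Q j)| <= tol i].
Proof.
move=> tol0.
pose f N j := proj1_sig (cid (select_pair N _ (tol0 j))).
have fP N j := proj2_sig (cid (select_pair N _ (tol0 j))).
pose P j := (chain f j).1; pose Q j := (chain f j).2.
pose start j := if j is j'.+1 then (Q j').+1 else 0%N.
have PQP j : [/\ (start j <= P j)%N, (P j < Q j)%N,
    forall c, (c <= P j)%N -> `|a (Q j) c| <= tol j &
    forall r, (r < start j)%N -> `|a r (P j) - a r (Q j)| <= tol j].
  by case: j => [|j]; apply: fP.
have PQ j : (P j < Q j)%N by case: (PQP j).
have QP j : (Q j < P j.+1)%N by case: (PQP j.+1).
have P_mono : {homo P : i j / (i < j)%N >-> (i < j)%N}.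
  by apply: homo_ltn => [i j k|i]; [exact: ltn_trans | exact: ltn_trans (PQ i) (QP i)].
have Q_mono : {homo Q : i j / (i < j)%N >-> (i < j)%N}.
  by apply: homo_ltn => [i j k|i]; [exact: ltn_trans | exact: ltn_trans (QP i) (PQ i.+1)].
exists P, Q; split => //.
- by move=> j; case: (PQP j) => _ _ small _; apply: small.
- move=> i j ij; case: (PQP j) => _ _ _; apply.
  by case: j ij => [//|j] /=; rewrite !ltnS (leq_mono Q_mono).
- move=> i j ji; case: (PQP i) => _ _ small _.
  have QjPi : (Q j <= P i)%N.
    by apply: ltnW; apply: leq_trans (QP j) _; rewrite (leq_mono P_mono).
  by split; apply: small => //; apply: leq_trans QjPi; apply: ltnW.
Qed.

End MatrixSelection.

Lemma exists_small_perturbation (R : realFieldType) (L c delta eta : R) :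
  0 < L -> 1 <= c -> 0 < delta -> 0 < eta ->
  exists kap, [/\ 0 < kap, kap <= delta / 2, c * kap / delta < 1 &
    L / ((delta - kap) * (1 - c * kap / delta)) <= L / delta + eta].
Proof.
move=> L0 c1 d0 e0.
pose W := 1 + c; pose kap := eta * delta * delta / (W * (L + eta * delta)).
have W0 : 0 < W by rewrite /W; lra.
have Le0 : 0 < L + eta * delta by rewrite addr_gt0 // mulr_gt0.
have k0 : 0 < kap by rewrite /kap divr_gt0 ?mulr_gt0.
have gapE : delta - W * kap = delta * L / (L + eta * delta).
  by rewrite /kap; field; rewrite !gt_eqF.
have gap0 : 0 < delta - W * kap by rewrite gapE divr_gt0 ?mulr_gt0.
have gap_low : delta - W * kap <= (delta - kap) * (1 - c * kap / delta).
  have -> : (delta - kap) * (1 - c * kap / delta) = delta - W * kap + c * kap * kap / delta.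
    by rewrite /W; field; rewrite gt_eqF.
  have c0 : 0 <= c by lra.
  by rewrite lerDl; apply: divr_ge0 (ltW d0); apply: mulr_ge0 (mulr_ge0 c0 (ltW k0)) (ltW k0).
exists kap; split => //.
- by rewrite ler_pdivlMr //; move: gap0; rewrite /W; nra.
- by rewrite ltr_pdivrMr // mul1r; move: gap0; rewrite /W; nra.
apply: (@le_trans _ _ (L / (delta - W * kap))).
  by rewrite ler_pM2l // lef_pV2 ?posrE // (lt_le_trans gap0 gap_low).
by rewrite gapE le_eqVlt; apply/orP; left; apply/eqP; field; rewrite !gt_eqF.
Qed.

Section SubsymmetricBasis.
Context {R : realType} {X : completeNormedModType R} {e : nat -> X}
  {estar : nat -> X -> R} {Cu Cs : R}.
Hypotheses (e_basis : schauder_basis e) (e_normed : normalized e)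
  (e_uncond : unconditional Cu e) (e_spread : spreading Cs e)
  (estarP : coord_functionals e estar).

Lemma coord_series_cvg x : cvgn (series (fun j => estar j x *: e j)).
Proof. by apply/cvg_ex; exists x; apply: estarP. Qed.

Lemma coord_series_lim x : limn (series (fun j => estar j x *: e j)) = x.
Proof. exact: cvg_lim (estarP x). Qed.

Lemma coord_unique (c : nat -> R) x :
  series (fun j => c j *: e j) @ \oo --> x -> forall k, estar k x = c k.
Proof.
move=> cx k; have [c0 [_ c0_uniq]] := e_basis x.
by rewrite -[estar k x]/((fun j => estar j x) k) -(c0_uniq _ (estarP x)) (c0_uniq _ cx).
Qed.

Lemma coord_linearP k a x y : estar k (a *: x + y) = a * estar k x + estar k y.
Proof.
apply: (coord_unique (fun j => a * estar j x + estar j y)).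
have -> : series (fun j => (a * estar j x + estar j y) *: e j) =
    (fun n => a *: series (fun j => estar j x *: e j) n +
              series (fun j => estar j y *: e j) n).
  apply/funext => n; rewrite /series /= scaler_sumr -big_split /=.
  by apply: eq_bigr => j _; rewrite scalerDl scalerA.
by apply: cvgD; [apply: cvgZr |]; apply: estarP.
Qed.

Lemma coordB k x y : estar k (x - y) = estar k x - estar k y.
Proof. by rewrite -scaleN1r addrC coord_linearP mulN1r addrC. Qed.

Lemma coord_basis k j : estar k (e j) = (k == j)%:R.
Proof.
apply: (coord_unique (fun k => (k == j)%:R)).
have [cv lim] := series_window (fun=> 1) e j j.+1.
rewrite big_nat1 scale1r in lim; rewrite -lim.
have -> : (fun k => (k == j)%:R *: e k) = (fun k => window j j.+1 (fun=> 1) k *: e k).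
  by apply/funext => i; rewrite /window ltnS -eqn_leq [j == i]eq_sym; case: (i == j).
exact: cv.
Qed.

Lemma coord_cvg0 x : (fun k => estar k x) @ \oo --> 0.
Proof.
apply/norm_cvg0P; have /cvg_series_cvg_0/norm_cvg0P := coord_series_cvg x.
by under eq_fun do rewrite normrZ e_normed mulr1.
Qed.

Lemma unconditional_block (c g : nat -> R) (M : R) m n : (forall k, `|g k| <= M) ->
  `|\sum_(m <= k < n) (g k * c k) *: e k| <= Cu * M * `|\sum_(m <= k < n) c k *: e k|.
Proof.
move=> gM; have [cv1 lim1] := series_window c e m n.
have [cv2 lim2] := series_window (fun k => g k * c k) e m n.
have := e_uncond (window m n c) g M gM cv1.
rewrite (_ : (fun j => (g j * window m n c j) *: e j) =
             (fun j => window m n (fun k => g k * c k) j *: e j)); last first.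
  by apply/funext => j; rewrite /window; case: ifP; rewrite ?mulr0.
by move/(_ cv2); rewrite lim1 lim2.
Qed.

Lemma unconditional_ge1 : 1 <= Cu.
Proof.
have := @unconditional_block (fun=> 1) (fun=> 1) 1 0 1 (fun=> ltac:(by rewrite normr1)).
by rewrite !big_nat1 !mulr1 !scale1r e_normed mulr1.
Qed.

Lemma spreading_ge1 : 1 <= Cs.
Proof.
have [cv lim1] := series_window (fun=> 1) e 0 1.
have [_] := e_spread id (window 0 1 (fun=> 1)) (fun i j ij => ij) cv cv.
by rewrite lim1 big_nat1 scale1r e_normed mulr1.
Qed.

Lemma spreading_block (nn : nat -> nat) (c : nat -> R) m n :
  {homo nn : i j / (i < j)%N >-> (i < j)%N} ->
  `|\sum_(m <= k < n) c k *: e (nn k)| <= Cs * `|\sum_(m <= k < n) c k *: e k|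
  /\ `|\sum_(m <= k < n) c k *: e k| <= Cs * `|\sum_(m <= k < n) c k *: e (nn k)|.
Proof.
move=> nn_mono; have [cv1 lim1] := series_window c e m n.
have [cv2 lim2] := series_window c (fun k => e (nn k)) m n.
have [lo hi] := e_spread nn (window m n c) nn_mono cv1 cv2.
rewrite lim1 lim2 in lo hi; split => //.
by rewrite -ler_pdivrMl ?(lt_le_trans ltr01 spreading_ge1) // mulrC.
Qed.

Section SeriesOperations.
Context {c : nat -> R}.
Hypothesis c_cvg : cvgn (series (fun j => c j *: e j)).

Lemma multiplier_series (g : nat -> R) (M : R) : (forall k, `|g k| <= M) ->
  cvgn (series (fun j => (g j * c j) *: e j)) /\
  `|limn (series (fun j => (g j * c j) *: e j))|
     <= Cu * M * `|limn (series (fun j => c j *: e j))|.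
Proof.
move=> gM; have M0 : 0 <= M by apply: le_trans (gM 0%N).
apply: series_block_le => // [|m n]; last exact: unconditional_block.
by rewrite mulr_ge0 // (le_trans ler01 unconditional_ge1).
Qed.

Lemma spread_series (nn : nat -> nat) : {homo nn : i j / (i < j)%N >-> (i < j)%N} ->
  cvgn (series (fun j => c j *: e (nn j))) /\
  `|limn (series (fun j => c j *: e (nn j)))| <= Cs * `|limn (series (fun j => c j *: e j))|.
Proof.
move=> nn_mono; apply: series_block_le => // [|m n].
  exact: le_trans ler01 spreading_ge1.
by case: (spreading_block nn c m n nn_mono).
Qed.

Lemma restrict_series (q : nat -> nat) : {homo q : i j / (i < j)%N >-> (i < j)%N} ->
  cvgn (series (fun i => c (q i) *: e (q i))) /\
  `|limn (series (fun i => c (q i) *: e (q i)))| <= Cu * `|limn (series (fun j => c j *: e j))|.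
Proof.
move=> q_mono; pose g k : R := if k \in range q then 1 else 0.
have [cvg_g le_g] := multiplier_series g 1
  (fun k => ltac:(by rewrite /g; case: ifP; rewrite ?normr1 ?normr0)).
have q_ge n : (n <= q n)%N by elim: n => // n IH; apply: leq_ltn_trans IH (q_mono _ _ _).
have q_leq := leq_mono q_mono; have q_lt := leqW_mono q_leq.
have partial n : series (fun i => c (q i) *: e (q i)) n =
                 series (fun j => (g j * c j) *: e j) (q n).
  elim: n => [|n IH].
    rewrite /series /= big_geq // big_nat big1 // => k /andP[_ kq].
    rewrite /g; case: ifP => [/set_mem [i _ qi]|_]; last by rewrite mul0r scale0r.
    by move: kq; rewrite -qi q_lt ltn0.
  rewrite seriesSr IH /series /= (@big_cat_nat _ _ _ (q n) 0 (q n.+1)) //=; last first.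
    exact: ltnW (q_mono _ _ _).
  congr (_ + _); rewrite big_ltn ?q_mono //.
  rewrite /g mem_set /=; last by exists n.
  rewrite mul1r big_nat big1 ?addr0 // => k /andP[qk kq].
  case: ifP => [/set_mem [i _ qi]|_]; last by rewrite mul0r scale0r.
  by move: qk kq; rewrite -qi !q_lt => /leq_gtF ->.
have sub_cvg : series (fun i => c (q i) *: e (q i)) @ \oo -->
               limn (series (fun j => (g j * c j) *: e j)).
  by rewrite (funext partial); apply: (cvg_subseq_ge _ _ _ q_ge cvg_g).
split; first by apply/cvg_ex; eexists; exact: sub_cvg.
by rewrite (cvg_lim _ sub_cvg) // -[Cu]mulr1.
Qed.

End SeriesOperations.

Lemma unspread_series (nn : nat -> nat) (c : nat -> R) :
  {homo nn : i j / (i < j)%N >-> (i < j)%N} ->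
  cvgn (series (fun j => c j *: e (nn j))) ->
  cvgn (series (fun j => c j *: e j)) /\
  `|limn (series (fun j => c j *: e j))| <= Cs * `|limn (series (fun j => c j *: e (nn j)))|.
Proof.
move=> nn_mono; apply: series_block_le => // [|m n].
  exact: le_trans ler01 spreading_ge1.
by case: (spreading_block nn c m n nn_mono).
Qed.

Lemma coord_le k x : `|estar k x| <= Cu * `|x|.
Proof.
pose g j : R := (j == k)%:R.
have [_] := multiplier_series (coord_series_cvg x) g 1
  (fun j => ltac:(by rewrite /g; case: (j == k); rewrite ?normr1 ?normr0)).
rewrite coord_series_lim mulr1.
have [_ lim1] := series_window (fun j => estar j x) e k k.+1; rewrite big_nat1 in lim1.
have -> : (fun j => (g j * estar j x) *: e j) =
          (fun j => window k k.+1 (fun j => estar j x) j *: e j).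
  apply/funext => j; rewrite /g /window ltnS -eqn_leq [k == j]eq_sym.
  by case: (j == k); rewrite ?mul1r ?mul0r.
by rewrite lim1 normrZ e_normed mulr1.
Qed.

Lemma coord_geometric_le (E : {linear X -> X}) (c r : R) :
  continuous E -> 0 <= c -> 0 <= r < 1 ->
  (forall i j, `|estar i (E (e j))| <= c * r ^+ i * r ^+ j) ->
  forall x, `|E x| <= Cu * c / (1 - r) ^+ 2 * `|x|.
Proof.
move=> Ec c0 r01 Eij x; have /andP[r0 r1] := r01.
have r1' : 0 < 1 - r by rewrite subr_gt0.
have column j : `|E (e j)| <= c * r ^+ j / (1 - r).
  have entry i : `|estar i (E (e j)) *: e i| <= c * r ^+ j * r ^+ i.
    by rewrite normrZ e_normed mulr1 mulrAC.
  have [_] := series_geometric_le _ _ _ (mulr_ge0 c0 (exprn_ge0 j r0)) r01 entry.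
  by rewrite coord_series_lim.
have Ex : series (fun j => estar j x *: E (e j)) @ \oo --> E x.
  have -> : series (fun j => estar j x *: E (e j)) =
            (fun n => E (series (fun j => estar j x *: e j) n)).
    apply/funext => n; rewrite /series /= linear_sum.
    by apply: eq_bigr => j _; rewrite linearZ.
  exact: cvg_comp _ _ (estarP x) (Ec x).
have C0 : 0 <= Cu * `|x| * c / (1 - r).
  apply: divr_ge0 (ltW r1'); apply: mulr_ge0 c0.
  exact: mulr_ge0 (le_trans ler01 unconditional_ge1) (normr_ge0 x).
have term j : `|estar j x *: E (e j)| <= Cu * `|x| * c / (1 - r) * r ^+ j.
  rewrite normrZ (le_trans (ler_pM (normr_ge0 _) (normr_ge0 _) (coord_le j x) (column j))) //.
  by rewrite le_eqVlt; apply/orP; left; apply/eqP; ring.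
have [_ le_lim] := series_geometric_le _ _ _ C0 r01 term.
rewrite (cvg_lim _ Ex) // in le_lim; apply: le_trans le_lim _.
by rewrite le_eqVlt; apply/orP; left; apply/eqP; field; rewrite gt_eqF.
Qed.

Definition spread (nn : nat -> nat) x := limn (series (fun j => estar j x *: e (nn j))).

Lemma spread_basis nn j : spread nn (e j) = e (nn j).
Proof.
have [_ lim1] := series_window (fun=> 1) (fun k => e (nn k)) j j.+1.
rewrite big_nat1 scale1r in lim1; rewrite -lim1 /spread.
congr (limn (series _)); apply/funext => k.
by rewrite coord_basis /window ltnS -eqn_leq [j == k]eq_sym; case: (k == j).
Qed.

Section Spread.
Context {nn : nat -> nat}.
Hypothesis nn_mono : {homo nn : i j / (i < j)%N >-> (i < j)%N}.

Lemma spread_cvg_le x :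
  cvgn (series (fun j => estar j x *: e (nn j))) /\ `|spread nn x| <= Cs * `|x|.
Proof.
have [cv bound] := spread_series (coord_series_cvg x) nn nn_mono.
by rewrite coord_series_lim in bound.
Qed.

Lemma spread_linear : linear (spread nn).
Proof.
apply: limn_series_linear => [n a x y|x]; last by case: (spread_cvg_le x).
by rewrite coord_linearP scalerDl scalerA.
Qed.

End Spread.

Section Construction.
Context {T : {linear X -> X}} {K delta kap : R} {P Q : nat -> nat}.
Local Notation a k m := (estar k (T (e m))).
Local Notation r := (2^-1 : R).
Hypotheses (T_le : forall x, `|T x| <= K * `|x|) (K_ge0 : 0 <= K)
  (diag_ge : forall j, delta <= `|a j j|) (delta_gt0 : 0 < delta)
  (kap_gt0 : 0 < kap) (kap_le : kap <= delta / 2)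
  (P_mono : {homo P : i j / (i < j)%N >-> (i < j)%N})
  (Q_mono : {homo Q : i j / (i < j)%N >-> (i < j)%N})
  (PQ_diag : forall j, `|a (Q j) (P j)| <= kap * r ^+ (j + j))
  (PQ_low : forall i j, (i < j)%N ->
     `|a (Q i) (P j) - a (Q i) (Q j)| <= kap * r ^+ (j + j))
  (PQ_up : forall i j, (j < i)%N ->
     `|a (Q i) (P j)| <= kap * r ^+ (i + i) /\ `|a (Q i) (Q j)| <= kap * r ^+ (i + i)).

Lemma gap_gt0 : 0 < delta - kap.
Proof. have := kap_le; have := delta_gt0; rewrite subr_gt0; lra. Qed.

Definition pivot j := a (Q j) (P j) - a (Q j) (Q j).

Lemma pivot_ge j : delta - kap <= `|pivot j|.
Proof.
have tol_le : kap * r ^+ (j + j) <= kap.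
  by apply: ler_piMr; [exact: ltW | apply: exprn_ile1; rewrite ?invr_ge0 ?invf_le1 ?ler1n].
have := lerB_dist (a (Q j) (Q j)) (a (Q j) (P j)); rewrite distrC -/(pivot j).
by have := diag_ge (Q j); have := PQ_diag j; lra.
Qed.

Lemma pivot_inv_le j : `|(pivot j)^-1| <= (delta - kap)^-1.
Proof.
have pivot_gt0 := lt_le_trans gap_gt0 (pivot_ge j).
by rewrite normfV lef_pV2 ?posrE ?gap_gt0 // pivot_ge.
Qed.

Lemma pivot_inv_le2 j : `|(pivot j)^-1| <= 2 / delta.
Proof.
apply: le_trans (pivot_inv_le j) _.
rewrite -[2 / delta]invf_div lef_pV2 ?posrE ?gap_gt0 ?divr_gt0 //.
by have := kap_le; lra.
Qed.

Lemma pivot_neq0 j : pivot j != 0.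
Proof. by rewrite -normr_gt0 (lt_le_trans gap_gt0 (pivot_ge j)). Qed.

Lemma offdiag_le i j : i != j ->
  `|a (Q i) (P j) - a (Q i) (Q j)| <= 2 * kap * (r ^+ i * r ^+ j).
Proof.
have r0 : 0 <= r by rewrite invr_ge0.
have pow_le m n : (m <= n)%N -> r ^+ (n + n) <= r ^+ m * r ^+ n.
  move=> mn; rewrite exprD ler_wpM2r ?exprn_ge0 //.
  by rewrite ler_wiXn2l // invf_le1 ?ler1n.
have kap0 := ltW kap_gt0.
have rij0 : 0 <= r ^+ i * r ^+ j by rewrite mulr_ge0 ?exprn_ge0.
have twice : kap * (r ^+ i * r ^+ j) <= 2 * kap * (r ^+ i * r ^+ j).
  by rewrite -mulrA ler_peMl ?mulr_ge0 // ler1n.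
rewrite neq_ltn => /orP[ij|ji].
  apply: le_trans (PQ_low i j ij) (le_trans _ twice).
  by rewrite ler_wpM2l // pow_le // ltnW.
have [Pji Qji] := PQ_up i j ji; have := ler_normB (a (Q i) (P j)) (a (Q i) (Q j)).
have : kap * r ^+ (i + i) <= kap * (r ^+ i * r ^+ j).
  by rewrite ler_wpM2l // mulrC pow_le // ltnW.
by lra.
Qed.

Definition Bop x := spread P x - spread Q x.

Lemma Bop_linear : linear Bop.
Proof.
move=> c x y; rewrite /Bop (spread_linear P_mono) (spread_linear Q_mono).
by rewrite scalerBr opprD addrACA.
Qed.

Lemma Bop_le x : `|Bop x| <= 2 * Cs * `|x|.
Proof.
have [_ Px] := spread_cvg_le P_mono x; have [_ Qx] := spread_cvg_le Q_mono x.
by apply: le_trans (ler_normB _ _) _; lra.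
Qed.

Lemma Bop_basis j : Bop (e j) = e (P j) - e (Q j).
Proof. by rewrite /Bop !spread_basis. Qed.

Definition Dop y := limn (series (fun i => ((pivot i)^-1 * estar (Q i) y) *: e i)).

Lemma Dop_cvg_le y :
  cvgn (series (fun i => ((pivot i)^-1 * estar (Q i) y) *: e i)) /\
  `|Dop y| <= Cu ^+ 2 * Cs / (delta - kap) * `|y|.
Proof.
have [cv1 le1] := restrict_series (coord_series_cvg y) Q Q_mono.
have [cv2 le2] := unspread_series Q _ Q_mono cv1.
have [cv3 le3] := multiplier_series cv2 _ _ pivot_inv_le.
split => //; rewrite coord_series_lim in le1.
have Cu0 : 0 <= Cu := le_trans ler01 unconditional_ge1.
have Cs0 : 0 <= Cs := le_trans ler01 spreading_ge1.
have gap0 : 0 <= (delta - kap)^-1 by rewrite invr_ge0 ltW // gap_gt0.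
apply: le_trans le3 _.
have -> : Cu ^+ 2 * Cs / (delta - kap) * `|y| = Cu * (delta - kap)^-1 * (Cs * (Cu * `|y|)).
  by ring.
by rewrite ler_wpM2l ?mulr_ge0 // (le_trans le2) // ler_wpM2l.
Qed.

Lemma Dop_linear : linear Dop.
Proof.
apply: limn_series_linear => [n c x y|x]; last by case: (Dop_cvg_le x).
by rewrite coord_linearP mulrDr scalerDl scalerA mulrCA.
Qed.

Lemma coord_Dop i y : estar i (Dop y) = (pivot i)^-1 * estar (Q i) y.
Proof. exact: coord_unique _ _ (Dop_cvg_le y).1 i. Qed.

Definition Eop x := Dop (T (Bop x)) - x.

Lemma Eop_linear : linear Eop.
Proof.
move=> c x y; rewrite /Eop Bop_linear linearP Dop_linear.
by rewrite scalerBr opprD addrACA.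
Qed.

Lemma Eop_continuous : continuous (linear_of Eop Eop_linear).
Proof.
apply: (@continuous_of_normB _ _ _ (Cu ^+ 2 * Cs / (delta - kap) * (K * (2 * Cs)) + 1)).
move=> x /=.
rewrite /Eop mulrDl mul1r (le_trans (ler_normB _ _)) // lerD2r.
have TB : `|T (Bop x)| <= K * (2 * Cs) * `|x|.
  by rewrite (le_trans (T_le _)) // -mulrA ler_wpM2l // Bop_le.
have D0 : 0 <= Cu ^+ 2 * Cs / (delta - kap).
  apply: divr_ge0 (ltW gap_gt0); apply: mulr_ge0 (le_trans ler01 spreading_ge1).
  exact: exprn_ge0 (le_trans ler01 unconditional_ge1).
by apply: le_trans (proj2 (Dop_cvg_le _)) _; rewrite -(mulrA _ _ `|x|) ler_wpM2l.
Qed.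

Lemma coord_Eop_basis_le i j : `|estar i (Eop (e j))| <= 4 * kap / delta * r ^+ i * r ^+ j.
Proof.
have c0 : 0 <= 4 * kap / delta by rewrite divr_ge0 ?mulr_ge0 ?ltW.
have r0 : 0 <= r by rewrite invr_ge0.
rewrite /Eop coordB coord_Dop Bop_basis linearB coordB coord_basis.
have [<-|ji] := eqVneq j i.
  rewrite -/(pivot j) mulVf ?pivot_neq0 // subrr normr0.
  exact: mulr_ge0 (mulr_ge0 c0 (exprn_ge0 _ r0)) (exprn_ge0 _ r0).
have ij : i != j by rewrite eq_sym.
rewrite subr0 normrM.
apply: le_trans (ler_pM (normr_ge0 _) (normr_ge0 _) (pivot_inv_le2 i) (offdiag_le i j ij)) _.
by rewrite le_eqVlt; apply/orP; left; apply/eqP; ring.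
Qed.

Lemma Eop_le x : `|Eop x| <= 16 * Cu * kap / delta * `|x|.
Proof.
have c0 : 0 <= 4 * kap / delta by rewrite divr_ge0 ?mulr_ge0 ?ltW.
have r01 : 0 <= r < 1 by apply/andP; split; [rewrite invr_ge0 | rewrite invf_lt1 // ltr1n].
have := coord_geometric_le _ _ _ Eop_continuous c0 r01 coord_Eop_basis_le x.
have -> : Cu * (4 * kap / delta) / (1 - r) ^+ 2 = 16 * Cu * kap / delta.
  by field; rewrite gt_eqF.
by [].
Qed.

Lemma factorization_construction : 16 * Cu * kap / delta < 1 ->
  exists A B : {linear X -> X},
  [/\ continuous A, continuous B, forall x, A (T (B x)) = x,
      forall x, `|A x| <= Cu ^+ 2 * Cs / ((delta - kap) * (1 - 16 * Cu * kap / delta)) * `|x| &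
      forall x, `|B x| <= 2 * Cs * `|x|].
Proof.
move=> eps_lt1; set eps := 16 * Cu * kap / delta.
have eps_ge0 : 0 <= eps.
  apply: divr_ge0 (ltW delta_gt0); apply: mulr_ge0 (ltW kap_gt0).
  exact: mulr_ge0 (ler0n _ 16) (le_trans ler01 unconditional_ge1).
have eps1 : 0 < 1 - eps by rewrite subr_gt0.
pose E := linear_of Eop Eop_linear.
have A_linear : linear (fun y => neumann E (Dop y)).
  by move=> c x y /=; rewrite Dop_linear (neumann_linear E eps_ge0 eps_lt1 Eop_le).
have A_le y : `|neumann E (Dop y)| <= Cu ^+ 2 * Cs / ((delta - kap) * (1 - eps)) * `|y|.
  apply: le_trans (proj2 (neumann_cvg_le E eps_ge0 eps_lt1 Eop_le _)) _.
  rewrite invfM mulrA mulrAC ler_pdivrMr // divfK ?gt_eqF //.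
  exact: (Dop_cvg_le y).2.
exists (linear_of _ A_linear), (linear_of Bop Bop_linear); split.
- by apply: (@continuous_of_normB _ _ _ (Cu ^+ 2 * Cs / ((delta - kap) * (1 - eps)))).
- by apply: (@continuous_of_normB _ _ _ (2 * Cs)) => x; apply: Bop_le.
- by move=> x /=; rewrite -[Dop _](subrK x) addrC (neumannK E eps_ge0 eps_lt1 Eop_le).
- exact: A_le.
- exact: Bop_le.
Qed.

End Construction.

Theorem subsymmetric_factorization (T : {linear X -> X}) : continuous T ->
  0 < inf [set `|estar j (T (e j))| | j in [set: nat]] ->
  forall eta : R, 0 < eta ->
  exists A B : {linear X -> X},
    [/\ continuous A, continuous B, forall x, A (T (B x)) = x &
        opnorm A * opnorm B
          <= 2 * Cu ^+ 2 * Cs ^+ 2 / inf [set `|estar j (T (e j))| | j in [set: nat]] + eta].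
Proof.
move=> T_cont; set delta := inf _ => delta_gt0 eta eta_gt0.
have [K K_ge0 T_le] := normB_of_continuous _ T_cont.
have diag_ge j : delta <= `|estar j (T (e j))|.
  by apply: ge_inf; [exists 0 => _ [i _ <-] | exists j].
have Cu1 := unconditional_ge1; have Cs1 := spreading_ge1.
have Cu0 : 0 < Cu by lra.
have Cs0 : 0 < Cs by lra.
have L_gt0 : 0 < 2 * Cu ^+ 2 * Cs ^+ 2.
  exact: mulr_gt0 (mulr_gt0 (ltr0Sn _ 1) (exprn_gt0 2 Cu0)) (exprn_gt0 2 Cs0).
have c_ge1 : 1 <= 16 * Cu by lra.
have [kap [kap_gt0 kap_le eps_lt1 bound]] :=
  exists_small_perturbation _ _ _ _ _ L_gt0 c_ge1 delta_gt0 eta_gt0.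
have entry_le k m : `|estar k (T (e m))| <= Cu * K.
  rewrite (le_trans (coord_le k _)) // ler_wpM2l ?(le_trans ler01) //.
  by rewrite (le_trans (T_le _)) // e_normed mulr1.
have tol_gt0 j : 0 < kap * 2^-1 ^+ (j + j) by rewrite mulr_gt0 // exprn_gt0.
have [P [Q [P_mono Q_mono PQ_diag PQ_low PQ_up]]] :=
  @select_sequences _ (fun k m => estar k (T (e m))) _ entry_le
    (fun m => coord_cvg0 (T (e m))) _ tol_gt0.
have [A [B [A_cont B_cont ATB A_le B_le]]] :=
  factorization_construction T_le K_ge0 diag_ge delta_gt0 kap_gt0 kap_le
    P_mono Q_mono PQ_diag PQ_low PQ_up eps_lt1.
exists A, B; split => //; apply: le_trans bound.
have D_gt0 : 0 < (delta - kap) * (1 - 16 * Cu * kap / delta).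
  by apply: mulr_gt0; rewrite subr_gt0; lra.
have -> : 2 * Cu ^+ 2 * Cs ^+ 2 / ((delta - kap) * (1 - 16 * Cu * kap / delta)) =
    Cu ^+ 2 * Cs / ((delta - kap) * (1 - 16 * Cu * kap / delta)) * (2 * Cs) by ring.
have A0 : 0 <= Cu ^+ 2 * Cs / ((delta - kap) * (1 - 16 * Cu * kap / delta)).
  by apply: divr_ge0 (ltW D_gt0); apply: mulr_ge0 (exprn_ge0 _ (ltW Cu0)) (ltW Cs0).
apply: ler_pM; [exact: opnorm_ge0 | exact: opnorm_ge0 | exact: opnorm_le _ _ A0 A_le |].
by apply: opnorm_le B_le; lra.
Qed.

End SubsymmetricBasis.

Theorem theorem2p1 (R : realType) (X : completeNormedModType R)
  (e : nat -> X) (estar : nat -> X -> R) (Cu Cs : R)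
  (T : {linear X -> X}) :
  schauder_basis e -> normalized e -> subsymmetric Cu Cs e ->
  coord_functionals e estar ->
  bounded_op T ->
  0 < inf [set `|estar j (T (e j))| | j in [set: nat]] ->
  forall eta : R, 0 < eta ->
  exists A B : {linear X -> X},
    [/\ bounded_op A, bounded_op B,
        (forall x : X, A (T (B x)) = x) &
        opnorm A * opnorm B
          <= 2 * Cu ^+ 5 * Cs ^+ 3
               / inf [set `|estar j (T (e j))| | j in [set: nat]] + eta].
Proof.
move=> e_basis e_normed [e_uncond e_spread] estarP T_cont delta_gt0 eta eta_gt0.
have [A [B [A_cont B_cont ATB AB_le]]] :=
  subsymmetric_factorization e_basis e_normed e_uncond e_spread estarP _ T_cont delta_gt0 _ eta_gt0.
exists A, B; split => //; apply: le_trans AB_le _.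
rewrite lerD2r; apply: ler_wpM2r; first by rewrite invr_ge0 ltW.
have Cu1 := unconditional_ge1 e_normed e_uncond.
have Cs1 := spreading_ge1 e_normed e_spread.
have Cu0 : 0 <= Cu by lra.
have Cs0 : 0 <= Cs by lra.
rewrite -(mulrA 2 (Cu ^+ 2)) -(mulrA 2 (Cu ^+ 5)) ler_pM2l //.
apply: ler_pM; rewrite ?exprn_ge0 //.
  exact: (ler_weXn2l Cu1).
exact: (ler_weXn2l Cs1).
Qed.
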